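(* Fix $d\ge 2$. The function $C(\rho,\sigma)=\sqrt{1-\mathcal{F}_2(\rho,\sigma)}$, where $\mathcal{F}_2(\rho,\sigma)=\operatorname{tr}(\rho\sigma)/\max[\operatorname{tr}(\rho^2),\operatorname{tr}(\sigma^2)]$, is a metric on the set of $d\times d$ density matrices; i.e. it is nonnegative, vanishes iff $\rho=\sigma$, is symmetric, and satisfies $C(\rho,\sigma)\le C(\rho,\tau)+C(\tau,\sigma)$ for all density matrices $\rho,\sigma,\tau$.
   Context: A density matrix is a positive semidefinite complex matrix of unit trace. *)

(* complex numbers R[i] over a real closed field R
   (e.g. R : realType gives the usual complex numbers). *)
From HB Require Import structures.
From mathcomp Require Import all_boot all_order all_algebra.
From mathcomp Require Import complex.
Set Implicit Arguments. Unset Strict Implicit. Unset Printing Implicit Defensive.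
Import Order.TTheory GRing.Theory Num.Theory.
Local Open Scope ring_scope.

Definition adjmx (R : rcfType) (d : nat) (A : 'M[R[i]]_d) : 'M[R[i]]_d :=
  (map_mx Num.conj A)^T.

Definition psdmx (R : rcfType) (d : nat) (A : 'M[R[i]]_d) : Prop :=
  adjmx A = A /\
  forall v : 'rV[R[i]]_d, 0 <= (v *m A *m (map_mx Num.conj v)^T) 0 0.

Definition density (R : rcfType) (d : nat) (A : 'M[R[i]]_d) : Prop :=
  psdmx A /\ \tr A = 1.

(* F_2(rho, sigma) = tr(rho sigma) / max(tr rho^2, tr sigma^2);
   the traces are real for Hermitian matrices, so we take real parts. *)
Definition F2 (R : rcfType) (d : nat) (rho sigma : 'M[R[i]]_d) : R :=
  complex.Re (\tr (rho *m sigma)) /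
  Num.max (complex.Re (\tr (rho *m rho))) (complex.Re (\tr (sigma *m sigma))).

Definition Cdist (R : rcfType) (d : nat) (rho sigma : 'M[R[i]]_d) : R :=
  Num.sqrt (1 - F2 rho sigma).

(* For the Hilbert-Schmidt inner product <A, B> = Re tr(A B) on Hermitian
   matrices, F2 A B = min(1/<A, A>, 1/<B, B>) <A, B>.  A min kernel of
   nonnegative weights is a nonnegative combination of indicator kernels of
   nested supports, so its entrywise product with the Gram kernel of <,> is
   positive semidefinite: F2 is a positive semidefinite kernel with unit
   diagonal.  Hence 1 - F2 = C^2 is conditionally negative definite; for three
   points this says that a binary quadratic form is nonnegative, and its
   discriminant condition is the triangle inequality for C. *)

From HB Require Import structures.
From mathcomp Require Import all_boot all_order all_algebra.
From mathcomp Require Import complex ring lra.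
Set Implicit Arguments. Unset Strict Implicit. Unset Printing Implicit Defensive.
Import Order.TTheory GRing.Theory Num.Theory.
Local Open Scope ring_scope.

Section PsdKernel.
Variables (R : realDomainType) (n : nat).
Implicit Types (k : 'I_n -> 'I_n -> R) (c w : 'I_n -> R).

Definition qform k c : R := \sum_i \sum_j c i * c j * k i j.

Definition psd_kernel k : Prop := forall c, 0 <= qform k c.

Lemma eq_qform k1 k2 c : k1 =2 k2 -> qform k1 c = qform k2 c.
Proof.
by move=> eq_k; apply: eq_bigr => i _; apply: eq_bigr => j _; rewrite eq_k.
Qed.

(* Writing [mu] for the least positive weight and [w'] for [w] lowered by
   [mu] on its support, [min (w i) (w j)] splits as [mu] times the
   indicator kernel of the support plus [min (w' i) (w' j)], and [w'] has a
   smaller support. *)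
Lemma psd_kernel_minM k w : (forall i, 0 <= w i) -> psd_kernel k ->
  psd_kernel (fun i j => Num.min (w i) (w j) * k i j).
Proof.
move=> w_ge0 k_psd c; have [m supp_lt] := ubnP #|[pred i | 0 < w i]|.
elim: m w w_ge0 supp_lt => // m IHm w w_ge0 supp_lt.
have [i0 wi0_gt0 | w_le0] := pickP [pred i | 0 < w i]; last first.
  have w0 i : w i = 0.
    by apply/le_anti; rewrite w_ge0 andbT leNgt; exact: negbT (w_le0 i).
  rewrite /qform big1 // => i _; rewrite big1 // => j _.
  by rewrite !w0 minxx mul0r mulr0.
set i1 := [arg min_(i < i0 | 0 < w i) w i]%O.
have [wi1_gt0 i1_min] : 0 < w i1 /\ forall j, 0 < w j -> w i1 <= w j.
  by rewrite /i1; case: arg_minP.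
set mu := w i1.
pose supp i : R := (0 < w i)%R%:R.
pose w' i := w i - mu * supp i.
have w'_ge0 i : 0 <= w' i.
  rewrite /w' /supp; have [/i1_min|] := ltrP 0 (w i).
    by rewrite mulr1 subr_ge0.
  by rewrite mulr0 subr0.
have suppN i : ~~ (0 < w i) -> [/\ w i = 0, supp i = 0 & w' i = 0].
  rewrite -leNgt => wi_le0.
  have wi0 : w i = 0 by apply/le_anti; rewrite wi_le0 w_ge0.
  by rewrite /w' /supp wi0 ltxx mulr0 subr0.
have minE i j :
    Num.min (w i) (w j) = mu * (supp i * supp j) + Num.min (w' i) (w' j).
  have [wi|/suppN[-> -> ->]] := boolP (0 < w i); last first.
    by rewrite mul0r mulr0 add0r !min_l ?w_ge0 ?w'_ge0.
  have [wj|/suppN[-> -> ->]] := boolP (0 < w j); last first.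
    by rewrite mulr0 mulr0 add0r !min_r ?w_ge0 ?w'_ge0.
  by rewrite /w' /supp wi wj !mulr1 addrC addr_minl !subrK.
have supp'_lt : (#|[pred i | (0 < w' i)%R]| < m)%N.
  suff /leq_trans-> :
    (#|[pred i | (0 < w' i)%R]| < #|[pred i | (0 < w i)%R]|)%N by [].
  apply: proper_card; apply/properP; split.
    apply/subsetP => i; rewrite !inE.
    by apply: contraLR => /suppN[_ _ ->]; rewrite ltxx.
  by exists i1; rewrite !inE /w' /supp ?wi1_gt0 // mulr1 subrr ltxx.
have -> : qform (fun i j => Num.min (w i) (w j) * k i j) c =
    mu * qform k (fun i => supp i * c i) +
    qform (fun i j => Num.min (w' i) (w' j) * k i j) c.
  rewrite /qform mulr_sumr -big_split; apply: eq_bigr => i _.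
  rewrite mulr_sumr -big_split /=; apply: eq_bigr => j _; rewrite minE; ring.
by rewrite addr_ge0 ?mulr_ge0 ?(ltW wi1_gt0) ?IHm.
Qed.
End PsdKernel.

Lemma invf_max (R : realFieldType) (x y : R) :
  0 < x -> 0 < y -> (Num.max x y)^-1 = Num.min x^-1 y^-1.
Proof.
move=> x_gt0 y_gt0; have [xy|/ltW yx] := leP x y.
  by rewrite min_r // lef_pV2 ?posrE.
by rewrite min_l // lef_pV2 ?posrE.
Qed.

Lemma affine_ge0_slope_eq0 (R : realFieldType) (a b : R) :
  (forall s, 0 <= a + s * b) -> b = 0.
Proof.
move=> ge0; apply/eqP; apply: contraT => b_neq0.
have := ge0 (- (a + 1) / b).
by rewrite divfK // opprD addrA subrr sub0r oppr_ge0 ler10.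
Qed.

(* At [(y, -x)] the form is [x y ((x + y)^2 - r)]; if [x] or [y] vanishes, the
   form is affine in the other variable. *)
Lemma le_sqr_add_of_qform (R : realFieldType) (x y r : R) : 0 <= x -> 0 <= y ->
  (forall s t,
     0 <= s * s * x ^+ 2 + t * t * y ^+ 2 + s * t * (r - x ^+ 2 - y ^+ 2)) ->
  r <= (x + y) ^+ 2.
Proof.
move=> x_ge0 y_ge0 Q_ge0.
have [x0|x_neq0] := eqVneq x 0.
  rewrite x0 in Q_ge0 *.
  suff /eqP : r - y ^+ 2 = 0 by rewrite subr_eq0 add0r => /eqP->.
  apply: (@affine_ge0_slope_eq0 _ (y ^+ 2)) => s.
  have -> : y ^+ 2 + s * (r - y ^+ 2) =
    s * s * 0 ^+ 2 + 1 * 1 * y ^+ 2 + s * 1 * (r - 0 ^+ 2 - y ^+ 2) by ring.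
  exact: Q_ge0.
have [y0|y_neq0] := eqVneq y 0.
  rewrite y0 in Q_ge0 *.
  suff /eqP : r - x ^+ 2 = 0 by rewrite subr_eq0 addr0 => /eqP->.
  apply: (@affine_ge0_slope_eq0 _ (x ^+ 2)) => t.
  have -> : x ^+ 2 + t * (r - x ^+ 2) =
    1 * 1 * x ^+ 2 + t * t * 0 ^+ 2 + 1 * t * (r - x ^+ 2 - 0 ^+ 2) by ring.
  exact: Q_ge0.
have xy_gt0 : 0 < x * y by rewrite mulr_gt0 // lt_def ?x_neq0 ?y_neq0.
rewrite -subr_ge0 -(pmulr_rge0 _ xy_gt0).
have -> : x * y * ((x + y) ^+ 2 - r) = y * y * x ^+ 2 + (- x) * (- x) * y ^+ 2
    + y * (- x) * (r - x ^+ 2 - y ^+ 2) by ring.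
exact: Q_ge0.
Qed.

Lemma sqrtr_le_add_of_qform (R : rcfType) (p q r : R) :
  (forall s t, 0 <= s * s * p + t * t * q + s * t * (r - p - q)) ->
  Num.sqrt r <= Num.sqrt p + Num.sqrt q.
Proof.
move=> Q_ge0.
have p_ge0 : 0 <= p.
  by have := Q_ge0 1 0; rewrite !(mul0r, mulr0, add0r, addr0, mul1r).
have q_ge0 : 0 <= q.
  by have := Q_ge0 0 1; rewrite !(mul0r, mulr0, add0r, addr0, mul1r).
suff /ler_wsqrtr : r <= (Num.sqrt p + Num.sqrt q) ^+ 2.
  by rewrite sqrtr_sqr ger0_norm // addr_ge0 ?sqrtr_ge0.
by apply: le_sqr_add_of_qform; rewrite ?sqrtr_ge0 ?sqr_sqrtr.
Qed.

Section HermitianMatrices.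
Variables (R : rcfType) (d : nat).
Implicit Types (A B : 'M[R[i]]_d) (c : R).

Definition hermmx A : Prop := adjmx A = A.

Definition hsdot A B : R := complex.Re (\tr (A *m B)).

Lemma adjmx_is_nmod_morphism : nmod_morphism (@adjmx R d).
Proof. by split=> [|A B]; rewrite /adjmx ?map_mx0 ?map_mxD ?trmx0 ?linearD. Qed.

HB.instance Definition _ :=
  GRing.isNmodMorphism.Build _ _ (@adjmx R d) adjmx_is_nmod_morphism.

Lemma adjmxZ c A : adjmx (c%:C%C *: A) = c%:C%C *: adjmx A.
Proof. by rewrite /adjmx map_mxZ linearZ; congr (_ *: _); exact: conjc_real. Qed.

Lemma hermmx_lincomb n (a : 'I_n -> R) (X : 'I_n -> 'M[R[i]]_d) :
  (forall k, hermmx (X k)) -> hermmx (\sum_k (a k)%:C%C *: X k).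
Proof.
move=> X_herm; rewrite /hermmx raddf_sum /=.
by apply: eq_bigr => k _; rewrite adjmxZ X_herm.
Qed.

Lemma hsdotC A B : hsdot A B = hsdot B A.
Proof. by rewrite /hsdot mxtrace_mulC. Qed.

Lemma hsdotBB A B :
  hsdot (A - B) (A - B) = hsdot A A + hsdot B B - 2 * hsdot A B.
Proof.
rewrite /hsdot mulmxBl !mulmxBr !linearB !raddfB /= (mxtrace_mulC B A).
ring.
Qed.

Lemma ReM_real c (z : R[i]) : complex.Re (c%:C%C * z) = c * complex.Re z.
Proof. by case: z => x y /=; ring. Qed.

Lemma hsdot_sum m n (a : 'I_m -> R) (b : 'I_n -> R) (X : 'I_m -> 'M[R[i]]_d)
    (Y : 'I_n -> 'M[R[i]]_d) :
  hsdot (\sum_k (a k)%:C%C *: X k) (\sum_l (b l)%:C%C *: Y l) =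
  \sum_k \sum_l a k * b l * hsdot (X k) (Y l).
Proof.
rewrite /hsdot.
have -> : \tr ((\sum_k (a k)%:C%C *: X k) *m (\sum_l (b l)%:C%C *: Y l)) =
    \sum_k \sum_l (a k * b l)%:C%C * \tr (X k *m Y l).
  rewrite mulmx_suml linear_sum; apply: eq_bigr => k _.
  rewrite mulmx_sumr linear_sum; apply: eq_bigr => l _.
  by rewrite -scalemxAl -scalemxAr scalerA linearZ rmorphM.
rewrite raddf_sum; apply: eq_bigr => k _.
rewrite raddf_sum; apply: eq_bigr => l _; exact: ReM_real.
Qed.

Lemma tr_mul_hermmx A :
  hermmx A -> \tr (A *m A) = \sum_k \sum_l A k l * (A k l)^*.
Proof.
move=> A_herm; apply: eq_bigr => k _; rewrite mxE; apply: eq_bigr => l _.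
by rewrite -{2}A_herm !mxE.
Qed.

Lemma hermmxB A B : hermmx A -> hermmx B -> hermmx (A - B).
Proof. by rewrite /hermmx raddfB /= => -> ->. Qed.

Lemma tr_mul_hermmx_ge0 A : hermmx A -> 0 <= \tr (A *m A).
Proof.
move=> A_herm; rewrite tr_mul_hermmx //.
by do 2!apply: sumr_ge0 => ? _; exact: mul_conjC_ge0.
Qed.

Lemma hsdot_self_ge0 A : hermmx A -> 0 <= hsdot A A.
Proof. by move/tr_mul_hermmx_ge0; rewrite lecE => /andP[]. Qed.

Lemma hsdot_self_eq0 A : hermmx A -> hsdot A A = 0 -> A = 0.
Proof.
move=> A_herm AA0; have := tr_mul_hermmx_ge0 A_herm.
rewrite lecE /= => /andP[/eqP Im0 _].
have : \tr (A *m A) = 0.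
  by move: AA0 Im0; rewrite /hsdot; case: (\tr _) => x y /= -> ->.
have entry_ge0 k l : 0 <= A k l * (A k l)^* by exact: mul_conjC_ge0.
rewrite tr_mul_hermmx // => tr0.
have row0 k : \sum_l A k l * (A k l)^* = 0.
  by apply: (psumr_eq0P _ tr0) => // k' _; apply: sumr_ge0 => l _.
apply/matrixP => k l; rewrite mxE; apply/eqP; rewrite -mul_conjC_eq0.
by rewrite (psumr_eq0P (fun l _ => entry_ge0 k l) (row0 k)).
Qed.

Lemma hsdot_self_gt0 A : hermmx A -> (0 < hsdot A A) = (A != 0).
Proof.
move=> A_herm; rewrite lt_def hsdot_self_ge0 // andbT; congr (~~ _).
apply/eqP/eqP => [/(hsdot_self_eq0 A_herm)|->] //.
by rewrite /hsdot mul0mx mxtrace0.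
Qed.

Lemma psd_kernel_hsdot n (X : 'I_n -> 'M[R[i]]_d) :
  (forall k, hermmx (X k)) -> psd_kernel (fun k l => hsdot (X k) (X l)).
Proof.
move=> X_herm a; have := hsdot_self_ge0 (hermmx_lincomb a X_herm).
by rewrite hsdot_sum.
Qed.

End HermitianMatrices.

Section DensityMetric.
Variables (R : rcfType) (d : nat).
Implicit Types A B rho sigma tau : 'M[R[i]]_d.

Lemma F2E A B : F2 A B = hsdot A B / Num.max (hsdot A A) (hsdot B B).
Proof. by []. Qed.

Lemma F2C A B : F2 A B = F2 B A.
Proof. by rewrite !F2E hsdotC maxC. Qed.

Lemma F2_self A : 0 < hsdot A A -> F2 A A = 1.
Proof. by move=> AA_gt0; rewrite F2E maxxx divff // gt_eqF. Qed.

Lemma F2_min A B : 0 < hsdot A A -> 0 < hsdot B B ->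
  F2 A B = Num.min (hsdot A A)^-1 (hsdot B B)^-1 * hsdot A B.
Proof. by move=> AA_gt0 BB_gt0; rewrite F2E invf_max // mulrC. Qed.

Lemma psd_kernel_F2 n (X : 'I_n -> 'M[R[i]]_d) :
  (forall k, hermmx (X k)) -> (forall k, X k != 0) ->
  psd_kernel (fun k l => F2 (X k) (X l)).
Proof.
move=> X_herm X_neq0 a.
have X_gt0 k : 0 < hsdot (X k) (X k) by rewrite hsdot_self_gt0.
have w_ge0 k : 0 <= (hsdot (X k) (X k))^-1 by rewrite invr_ge0 ltW.
rewrite (eq_qform _ (fun k l => F2_min (X_gt0 k) (X_gt0 l))).
exact: psd_kernel_minM w_ge0 (psd_kernel_hsdot X_herm) a.
Qed.

(* The weights [(s, t - s, -t)] sum to zero and [F2] has unit diagonal, so the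
   quadratic form of [F2] at these weights is twice the form below. *)
Lemma qform_one_sub_F2_ge0 rho tau sigma :
  hermmx rho -> hermmx tau -> hermmx sigma ->
  rho != 0 -> tau != 0 -> sigma != 0 ->
  forall s t, 0 <= s * s * (1 - F2 rho tau) + t * t * (1 - F2 tau sigma)
    + s * t * ((1 - F2 rho sigma) - (1 - F2 rho tau) - (1 - F2 tau sigma)).
Proof.
move=> rho_herm tau_herm sigma_herm rho_neq0 tau_neq0 sigma_neq0 s t.
pose X k := [:: rho; tau; sigma]`_k.
have X_herm (k : 'I_3) : hermmx (X k) by case: k => [[|[|[]]]].
have X_neq0 (k : 'I_3) : X k != 0 by case: k => [[|[|[]]]].
have := psd_kernel_F2 X_herm X_neq0 (fun k => [:: s; t - s; - t]`_k).
rewrite /qform /X !big_ord_recl !big_ord0 /= !F2_self ?hsdot_self_gt0 //.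
by rewrite (F2C tau rho) (F2C sigma rho) (F2C sigma tau); lra.
Qed.

Lemma CdistC rho sigma : Cdist rho sigma = Cdist sigma rho.
Proof. by rewrite /Cdist F2C. Qed.

Lemma Cdist_triangle rho sigma tau :
  hermmx rho -> hermmx sigma -> hermmx tau ->
  rho != 0 -> sigma != 0 -> tau != 0 ->
  Cdist rho sigma <= Cdist rho tau + Cdist tau sigma.
Proof.
by move=> *; apply: sqrtr_le_add_of_qform; exact: qform_one_sub_F2_ge0.
Qed.

Lemma Cdist_eq0 rho sigma :
  hermmx rho -> hermmx sigma -> rho != 0 -> sigma != 0 ->
  Cdist rho sigma = 0 <-> rho = sigma.
Proof.
move=> rho_herm sigma_herm; rewrite -!hsdot_self_gt0 // => rho_gt0 sigma_gt0.
split=> [|<-]; last by rewrite /Cdist F2_self // subrr sqrtr0.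
set M := Num.max (hsdot rho rho) (hsdot sigma sigma).
have M_gt0 : 0 < M by rewrite lt_max rho_gt0.
have rho_le : hsdot rho rho <= M by rewrite le_max lexx.
have sigma_le : hsdot sigma sigma <= M by rewrite le_max lexx orbT.
move/eqP; rewrite sqrtr_eq0 subr_le0 F2E ler_pdivlMr // mul1r -/M => M_le_dot.
have diff_herm := hermmxB rho_herm sigma_herm.
apply/eqP; rewrite -subr_eq0; apply/eqP/(hsdot_self_eq0 diff_herm)/le_anti.
by rewrite hsdot_self_ge0 // andbT hsdotBB; lra.
Qed.

Lemma density_hermmx rho : density rho -> hermmx rho.
Proof. by case=> [[]]. Qed.

Lemma density_neq0 rho : density rho -> rho != 0.
Proof.
by case=> _ tr1; apply: contra_eqN tr1 => /eqP->; rewrite mxtrace0 eq_sym oner_eq0.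
Qed.
End DensityMetric.

Theorem theorem9 (R : rcfType) (d : nat) (hd : (2 <= d)%N) :
  (forall rho sigma : 'M[R[i]]_d, density rho -> density sigma ->
     0 <= Cdist rho sigma) /\
  (forall rho sigma : 'M[R[i]]_d, density rho -> density sigma ->
     (Cdist rho sigma = 0 <-> rho = sigma)) /\
  (forall rho sigma : 'M[R[i]]_d, density rho -> density sigma ->
     Cdist rho sigma = Cdist sigma rho) /\
  (forall rho sigma tau : 'M[R[i]]_d,
     density rho -> density sigma -> density tau ->
     Cdist rho sigma <= Cdist rho tau + Cdist tau sigma).
Proof.
split; first by move=> *; exact: sqrtr_ge0.
split.
  move=> *; apply: Cdist_eq0; by [apply: density_hermmx | apply: density_neq0].
split; first by move=> *; exact: CdistC.
move=> *; apply: Cdist_triangle; by [apply: density_hermmx | apply: density_neq0].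
Qed.
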